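(* Let $K(\mathbf x)$ and $M(\mathbf x)$ be real symmetric positive definite $n\times n$ matrices depending on a parameter $\mathbf x\in\mathbb R^\ell$ in a $\mathcal C^2$ way. Fix $\mathbf x^{(0)}\in\mathbb R^\ell$ and let $U_m(\mathbf x^{(0)})\in\mathbb R^{n\times m}$ be the $M(\mathbf x^{(0)})$-orthogonal basis produced by the Lanczos process at $\mathbf x^{(0)}$, so that $U_m(\mathbf x^{(0)})^T M(\mathbf x^{(0)}) U_m(\mathbf x^{(0)}) = I_m$. Let $F(\mathbf x) = U_m(\mathbf x)^T M(\mathbf x) K(\mathbf x)^{-1} M(\mathbf x) U_m(\mathbf x)$ be the Lanczos projection at $\mathbf x$, so in particular $F(\mathbf x^{(0)}) = U_m(\mathbf x^{(0)})^T M(\mathbf x^{(0)}) K(\mathbf x^{(0)})^{-1} M(\mathbf x^{(0)}) U_m(\mathbf x^{(0)})$. Then there exist a neighborhood $\mathcal N$ of $\mathbf x^{(0)}$ and a matrix-valued function $U_{m,0}:\mathcal N\to\mathbb R^{n\times m}$ such that: 1. for every $\mathbf x\in\mathcal N$, the columns of $U_{m,0}(\mathbf x)$ form an $M(\mathbf x)$-orthogonal basis of the column span of $U_m(\mathbf x^{(0)})$, i.e. $U_{m,0}(\mathbf x)^T M(\mathbf x) U_{m,0}(\mathbf x) = I_m$ and $\operatorname{span} U_{m,0}(\mathbf x) = \operatorname{span} U_m(\mathbf x^{(0)})$; 2. the function $F_0(\mathbf x) := U_{m,0}(\mathbf x)^T M(\mathbf x) K(\mathbf x)^{-1} M(\mathbf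 x) U_{m,0}(\mathbf x)$ is of class $\mathcal C^2(\mathcal N)$ and $F_0(\mathbf x^{(0)}) = F(\mathbf x^{(0)})$.
   Context: The setting is a parametric finite element model: $K(\mathbf x)$ (stiffness) and $M(\mathbf x)$ (mass) are the constraint-projected matrices, and the smallest eigenvalues of the pencil $K(\mathbf x)-\lambda M(\mathbf x)$ are approximated by running an inverse Lanczos process (with a fixed starting vector) on $M(\mathbf x)^{1/2}K(\mathbf x)^{-1}M(\mathbf x)^{1/2}$, implemented with the $M(\mathbf x)$-inner product; $U_m(\mathbf x)$ denotes the resulting $n\times m$ $M(\mathbf x)$-orthogonal Krylov basis. A matrix $U$ is $M$-orthogonal if $U^TMU=I$. *)

From mathcomp Require Import all_boot all_algebra all_classical all_reals all_analysis.
Import GRing.Theory Num.Theory numFieldNormedType.Exports.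
Set Implicit Arguments. Unset Strict Implicit. Unset Printing Implicit Defensive.
Local Open Scope classical_set_scope.
Local Open Scope ring_scope.

Definition ebasis (R : realType) (l : nat) (k : 'I_l) : 'rV[R]_l := delta_mx 0 k.

Definition partial (R : realType) (l : nat) (f : 'rV[R]_l -> R) (k : 'I_l)
  : 'rV[R]_l -> R := fun x => 'D_(ebasis R k) f x.

Definition cont_at (R : realType) (l : nat) (f : 'rV[R]_l -> R) (x : 'rV[R]_l) :=
  {for x, continuous f}.

Definition C2_on (R : realType) (l : nat) (N : set 'rV[R]_l) (f : 'rV[R]_l -> R) :=
  open N /\
  (forall x, N x -> cont_at f x) /\
  (forall k x, N x -> derivable f x (ebasis R k)) /\
  (forall k x, N x -> cont_at (partial f k) x) /\
  (forall k j x, N x -> derivable (partial f k) x (ebasis R j)) /\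
  (forall k j x, N x -> cont_at (partial (partial f k) j) x).

Definition mxC2_on (R : realType) (l p q : nat) (N : set 'rV[R]_l)
  (F : 'rV[R]_l -> 'M[R]_(p, q)) :=
  forall (a : 'I_p) (b : 'I_q), C2_on N (fun x => F x a b).

Definition sym_mx (R : realType) (n : nat) (A : 'M[R]_n) := A^T = A.

Definition posdef_mx (R : realType) (n : nat) (A : 'M[R]_n) :=
  forall v : 'cV[R]_n, v != 0 -> 0 < (v^T *m A *m v) 0 0.

Definition spd_mx (R : realType) (n : nat) (A : 'M[R]_n) := sym_mx A /\ posdef_mx A.

Definition M_orthonormal (R : realType) (n m : nat) (M : 'M[R]_n) (U : 'M[R]_(n, m)) :=
  U^T *m M *m U = 1%:M.

Definition krylov_mx (R : realType) (n m : nat) (A : 'M[R]_n) (b : 'cV[R]_n)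
  : 'M[R]_(n, m) := \matrix_(i < n, j < m) (iter j (mulmx A) b) i 0.

Definition upper_pos_diag (R : realType) (m : nat) (T : 'M[R]_m) :=
  (forall i j : 'I_m, (j < i)%N -> T i j = 0) /\ (forall i : 'I_m, 0 < T i i).

(* U is the m-step (exact arithmetic, no breakdown) Lanczos basis for the pencil
   K - lambda M obtained by the inverse Lanczos process on M^{1/2} K^{-1} M^{1/2},
   run in the M-inner product with starting vector b.  In M-inner-product form
   this is the M-orthonormal basis obtained by Gram-Schmidt from the Krylov
   vectors b, (K^{-1} M) b, ..., (K^{-1} M)^{m-1} b, i.e. the unique
   M-orthonormal U with  Krylov = U T, T upper triangular with positive diagonal. *)
Definition lanczos_basis (R : realType) (n m : nat) (K M : 'M[R]_n) (b : 'cV[R]_n)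
  (U : 'M[R]_(n, m)) :=
  M_orthonormal M U /\
  exists T : 'M[R]_m, upper_pos_diag T /\ krylov_mx m (invmx K *m M) b = U *m T.

From mathcomp Require Import all_boot all_algebra all_classical all_reals all_analysis.
Import GRing.Theory Num.Theory numFieldNormedType.Exports order.Order.TTheory.

Set Implicit Arguments.
Unset Strict Implicit.
Unset Printing Implicit Defensive.

Local Open Scope ring_scope.

(* Since [Um0] is [M x0]-orthonormal, [G x := Um0^T M x Um0] is a C^2 family
   of symmetric positive definite m x m matrices with [G x0 = 1].  One step of
   Cholesky's algorithm clears the first row and column of [G x] using the
   pivot, its square root and the Schur complement, which are built from the
   entries of [G x] by sums, products, inverses of nonvanishing functions and
   square roots of positive ones, hence are C^2.  Induction on the size gives a
   C^2 family [L] with [L^T G L = 1] and [L x0 = 1].  Then [U0 := Um0 L] is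
   [M x]-orthonormal with the column span of [Um0], and [F0] is C^2 because
   [invmx K = adj K / det K].  The neighbourhood is the whole parameter space. *)

Section ChainRule.
Variables (R : realType) (V : normedModType R).

Lemma derive_line (f : V -> R) x v :
  'D_v f x = 'D_1 (fun h : R => f (h *: v + x)) 0.
Proof.
rewrite /derive /=.
by under [in RHS]eq_fun => h do rewrite scale0r add0r addr0 [h%:A]mulr1.
Qed.

Lemma is_derive_comp1 (f : V -> R) (g : R -> R) x v (dg df : R) :
  is_derive (f x) 1 g dg -> is_derive x v f df -> is_derive x v (g \o f) (dg * df).
Proof.
move=> Dg Df; have /derivable1P/derivable1_diffP f_diff : derivable f x v by [].
have g_diff : differentiable g (f (0 *: v + x)).
  by rewrite scale0r add0r; apply/derivable1_diffP.
apply: DeriveDef.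
  exact/derivable1P/derivable1_diffP/(differentiable_comp f_diff g_diff).
have <- : 'D_v f x = df := derive_val.
have <- : 'D_1 g (f x) = dg := derive_val.
rewrite derive_line (derive_line f) -!derive1E.
rewrite (derive1_comp ((derivable1_diffP _ _).2 f_diff) ((derivable1_diffP _ _).2 g_diff)).
by rewrite /= scale0r add0r derive1E.
Qed.

End ChainRule.

Section Smoothness.
Context {R : realType} {l : nat}.
Implicit Types f g : 'rV[R]_l -> R.

Fixpoint Ck k f : Prop :=
  match k with
  | 0 => continuous f
  | k.+1 => continuous f /\
      forall i : 'I_l, (forall x, derivable f x (ebasis R i)) /\ Ck k (partial f i)
  end.

Lemma CkS k f : Ck k.+1 f -> Ck k f.
Proof.
elim: k f => [|k IH] f /= [cf Hf] //; split => // i.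
by have [df pf] := Hf i; split => //; apply: IH.
Qed.

Lemma Ck_cst {k} (c : R) : Ck k (fun _ => c).
Proof.
elim: k c => [|k IH] c /=; first exact: cst_continuous.
split=> [|i]; first exact: cst_continuous.
split=> [x|]; first exact: derivable_cst.
have -> : partial (fun _ => c) i = (fun _ => 0).
  by apply: funext => y; exact: (derive_cst c).
exact: IH.
Qed.

Lemma CkD k f g : Ck k f -> Ck k g -> Ck k (fun x => f x + g x).
Proof.
elim: k f g => [|k IH] f g /=.
  by move=> cf cg x; exact: continuousD (cf x) (cg x).
move=> [cf Hf] [cg Hg]; split=> [x|i]; first exact: continuousD (cf x) (cg x).
have [df pf] := Hf i; have [dg pg] := Hg i.
split=> [x|]; first exact: derivableD.
have -> : partial (fun y => f y + g y) i = (fun y => partial f i y + partial g i y).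
  by apply: funext => y; exact: (deriveD (df y) (dg y)).
exact: IH.
Qed.

Lemma CkM k f g : Ck k f -> Ck k g -> Ck k (fun x => f x * g x).
Proof.
elim: k f g => [|k IH] f g /=.
  by move=> cf cg x; exact: continuousM (cf x) (cg x).
move=> [cf Hf] [cg Hg]; split=> [x|i]; first exact: continuousM (cf x) (cg x).
have [df pf] := Hf i; have [dg pg] := Hg i.
split=> [x|]; first exact: derivableM.
have -> : partial (fun y => f y * g y) i =
    (fun y => f y * partial g i y + g y * partial f i y).
  by apply: funext => y; exact: (deriveM (df y) (dg y)).
by apply: CkD; apply: IH => //; apply: CkS; split.
Qed.

Lemma CkV k f : (forall x, f x != 0) -> Ck k f -> Ck k (fun x => (f x)^-1).
Proof.
move=> f_neq0; elim: k f f_neq0 => [|k IH] f f_neq0 /=.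
  by move=> cf x; exact: (continuousV (f_neq0 x) (cf x)).
move=> [cf Hf]; split=> [x|i]; first exact: (continuousV (f_neq0 x) (cf x)).
have [df pf] := Hf i; split=> [x|]; first exact: derivableV.
have -> : partial (fun y => (f y)^-1) i =
    (fun y => -1 * ((f y)^-1 * (f y)^-1) * partial f i y).
  by apply: funext => y; rewrite /partial (deriveV (f_neq0 y) (df y)) mulN1r -invfM -expr2.
have Ckf : Ck k f by apply: CkS; split.
by apply: CkM => //; apply: (CkM (Ck_cst (-1))); apply: CkM; apply: IH.
Qed.

Lemma Ck_sqrt k f : (forall x, 0 < f x) -> Ck k f -> Ck k (fun x => Num.sqrt (f x)).
Proof.
move=> f_gt0; elim: k f f_gt0 => [|k IH] f f_gt0 /=.
  by move=> cf x; apply: continuous_comp; [exact: cf | exact: sqrt_continuous].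
move=> [cf Hf]; split=> [x|i].
  by apply: continuous_comp; [exact: cf | exact: sqrt_continuous].
have [df pf] := Hf i.
have Dsqrt y : is_derive y (ebasis R i) (fun z => Num.sqrt (f z))
    ((2 * Num.sqrt (f y))^-1 * partial f i y).
  exact: is_derive_comp1 (is_derive1_sqrt (f_gt0 y)) (derivableP (df y)).
split=> [x|]; first exact: ex_derive.
have -> : partial (fun y => Num.sqrt (f y)) i =
    (fun y => (2 * Num.sqrt (f y))^-1 * partial f i y).
  by apply: funext => y; exact: derive_val.
apply: CkM => //; apply: CkV.
  by move=> x; rewrite mulf_neq0 // sqrtr_eq0 -ltNge f_gt0.
by apply: (CkM (Ck_cst 2)); apply: IH => //; apply: CkS; split.
Qed.

Lemma Ck_sum k (I : Type) (r : seq I) (P : pred I) (F : I -> 'rV[R]_l -> R) :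
  (forall i, P i -> Ck k (F i)) -> Ck k (fun x => \sum_(i <- r | P i) F i x).
Proof.
move=> CkF; elim: r => [|a r IH].
  by under eq_fun => x do rewrite big_nil; exact: Ck_cst.
under eq_fun => x do rewrite big_cons.
by case Pa: (P a) => //; apply: CkD => //; apply: CkF.
Qed.

Lemma Ck_prod k (I : Type) (r : seq I) (P : pred I) (F : I -> 'rV[R]_l -> R) :
  (forall i, P i -> Ck k (F i)) -> Ck k (fun x => \prod_(i <- r | P i) F i x).
Proof.
move=> CkF; elim: r => [|a r IH].
  by under eq_fun => x do rewrite big_nil; exact: Ck_cst.
under eq_fun => x do rewrite big_cons.
by case Pa: (P a) => //; apply: CkM => //; apply: CkF.
Qed.

Lemma C2_onT f : C2_on setT f <-> Ck 2 f.
Proof.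
split=> [[_ [c [d [pc [pd ppc]]]]] | [c Hf]].
  split=> [x|i]; first exact: c.
  split=> [x|]; first exact: d.
  split=> [x|j]; first exact: pc.
  by split=> [x|x]; [exact: pd | exact: ppc].
have Hf1 i := (Hf i).1; have Hf2 i j := ((Hf i).2.2 j).
split; first exact: openT.
split=> [x _|]; first exact: c.
split=> [i x _|]; first exact: Hf1.
split=> [i x _|]; first exact: (Hf i).2.1.
by split=> [i j x _ | i j x _]; [exact: (Hf2 i j).1 | exact: (Hf2 i j).2].
Qed.

Definition mxCk k p q (A : 'rV[R]_l -> 'M[R]_(p, q)) :=
  forall i j, Ck k (fun x => A x i j).

Lemma mxC2_onT p q (A : 'rV[R]_l -> 'M[R]_(p, q)) : mxC2_on setT A <-> mxCk 2 A.
Proof. by split=> CA i j; apply/C2_onT. Qed.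

Lemma mxCk_cst {k} p q (C : 'M[R]_(p, q)) : mxCk k (fun _ => C).
Proof. by move=> i j; exact: Ck_cst. Qed.

Lemma mxCkD k p q (A B : 'rV[R]_l -> 'M[R]_(p, q)) :
  mxCk k A -> mxCk k B -> mxCk k (fun x => A x + B x).
Proof. by move=> CA CB i j; under eq_fun => x do rewrite mxE; exact: CkD. Qed.

Lemma mxCkZ k p q (c : 'rV[R]_l -> R) (A : 'rV[R]_l -> 'M[R]_(p, q)) :
  Ck k c -> mxCk k A -> mxCk k (fun x => c x *: A x).
Proof. by move=> Cc CA i j; under eq_fun => x do rewrite mxE; exact: CkM. Qed.

Lemma mxCkN k p q (A : 'rV[R]_l -> 'M[R]_(p, q)) :
  mxCk k A -> mxCk k (fun x => - A x).
Proof.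
by move=> CA; under eq_fun => x do rewrite -scaleN1r; apply: mxCkZ => //; exact: Ck_cst.
Qed.

Lemma mxCk_mul k p q r (A : 'rV[R]_l -> 'M[R]_(p, q)) (B : 'rV[R]_l -> 'M[R]_(q, r)) :
  mxCk k A -> mxCk k B -> mxCk k (fun x => A x *m B x).
Proof.
move=> CA CB i j; under eq_fun => x do rewrite mxE.
by apply: Ck_sum => t _; exact: CkM.
Qed.

Lemma mxCk_tr k p q (A : 'rV[R]_l -> 'M[R]_(p, q)) :
  mxCk k A -> mxCk k (fun x => (A x)^T).
Proof. by move=> CA i j; under eq_fun => x do rewrite mxE. Qed.

Lemma mxCk_scalar k p (c : 'rV[R]_l -> R) :
  Ck k c -> mxCk k (fun x => (c x)%:M : 'M[R]_p).
Proof.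
move=> Cc i j; under eq_fun => x do rewrite mxE.
by case: (i == j); [under eq_fun => x do rewrite mulr1n | exact: Ck_cst].
Qed.

Lemma mxCk_block k p1 p2 q1 q2 (Aul : 'rV[R]_l -> 'M[R]_(p1, q1))
    (Aur : 'rV[R]_l -> 'M[R]_(p1, q2)) (Adl : 'rV[R]_l -> 'M[R]_(p2, q1))
    (Adr : 'rV[R]_l -> 'M[R]_(p2, q2)) :
  mxCk k Aul -> mxCk k Aur -> mxCk k Adl -> mxCk k Adr ->
  mxCk k (fun x => block_mx (Aul x) (Aur x) (Adl x) (Adr x)).
Proof.
move=> Cul Cur Cdl Cdr i j; rewrite -(fintype.splitK i) -(fintype.splitK j).
case: (fintype.split i) => i'; case: (fintype.split j) => j'.
- by under eq_fun => x do rewrite block_mxEul.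
- by under eq_fun => x do rewrite block_mxEur.
- by under eq_fun => x do rewrite block_mxEdl.
- by under eq_fun => x do rewrite block_mxEdr.
Qed.

Lemma mxCk_ulsub k p1 p2 q1 q2 (A : 'rV[R]_l -> 'M[R]_(p1 + p2, q1 + q2)) :
  mxCk k A -> mxCk k (fun x => ulsubmx (A x)).
Proof. by move=> CA i j; under eq_fun => x do rewrite ulsubmxEsub mxE. Qed.

Lemma mxCk_ursub k p1 p2 q1 q2 (A : 'rV[R]_l -> 'M[R]_(p1 + p2, q1 + q2)) :
  mxCk k A -> mxCk k (fun x => ursubmx (A x)).
Proof. by move=> CA i j; under eq_fun => x do rewrite ursubmxEsub mxE. Qed.

Lemma mxCk_drsub k p1 p2 q1 q2 (A : 'rV[R]_l -> 'M[R]_(p1 + p2, q1 + q2)) :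
  mxCk k A -> mxCk k (fun x => drsubmx (A x)).
Proof. by move=> CA i j; under eq_fun => x do rewrite drsubmxEsub mxE. Qed.

Lemma Ck_det k p (A : 'rV[R]_l -> 'M[R]_p) : mxCk k A -> Ck k (fun x => \det (A x)).
Proof.
move=> CA; apply: Ck_sum => s _; apply: CkM; first exact: Ck_cst.
by apply: Ck_prod => i _; exact: CA.
Qed.

Lemma mxCk_adj k p (A : 'rV[R]_l -> 'M[R]_p) : mxCk k A -> mxCk k (fun x => \adj (A x)).
Proof.
move=> CA i j; under eq_fun => x do rewrite mxE /cofactor.
apply: CkM; first exact: Ck_cst.
by apply: Ck_det => a b; under eq_fun => x do rewrite !mxE.
Qed.

Lemma mxCk_inv k p (A : 'rV[R]_l -> 'M[R]_p) : (forall x, A x \in unitmx) ->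
  mxCk k A -> mxCk k (fun x => invmx (A x)).
Proof.
move=> A_unit CA; under eq_fun => x do rewrite /invmx A_unit.
apply: mxCkZ; last exact: mxCk_adj.
by apply: CkV; [move=> x; rewrite -unitfE -unitmxE | exact: Ck_det].
Qed.

End Smoothness.

Lemma mulmx_congr (R : comRingType) n p q
    (G : 'M[R]_n) (A : 'M[R]_(n, p)) (B : 'M[R]_(p, q)) :
  (A *m B)^T *m G *m (A *m B) = B^T *m (A^T *m G *m A) *m B.
Proof. by rewrite trmx_mul !mulmxA. Qed.

Section InverseCholeskyStep.
Variables (R : realType) (p : nat).
Implicit Types G : 'M[R]_(1 + p).

Definition chol_pivot G := ulsubmx G 0 0.

Definition schur_compl G : 'M[R]_p :=
  drsubmx G - (chol_pivot G)^-1 *: ((ursubmx G)^T *m ursubmx G).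

Definition chol_elim G : 'M[R]_(1 + p) :=
  block_mx 1%:M (- ((chol_pivot G)^-1 *: ursubmx G)) 0 1%:M.

Definition inv_chol_step G (L : 'M[R]_p) : 'M[R]_(1 + p) :=
  chol_elim G *m block_mx (Num.sqrt (chol_pivot G))^-1%:M 0 0 L.

Lemma chol_elim_congr G : sym_mx G -> chol_pivot G != 0 ->
  (chol_elim G)^T *m G *m chol_elim G = block_mx (ulsubmx G) 0 0 (schur_compl G).
Proof.
move=> G_sym a_neq0; rewrite /chol_elim /schur_compl.
have ulE : ulsubmx G = (chol_pivot G)%:M by rewrite [LHS]mx11_scalar.
have GE : G = block_mx (ulsubmx G) (ursubmx G) (ursubmx G)^T (drsubmx G).
  by rewrite trmx_ursub G_sym submxK.
rewrite [X in _ *m X *m _]GE tr_block_mx !trmx1 trmx0 !mulmx_block.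
rewrite !mul1mx !mul0mx !mulmx0 !mulmx1 ?addr0 ?add0r.
have E1 : ulsubmx G *m ((chol_pivot G)^-1 *: ursubmx G) = ursubmx G.
  by rewrite ulE mul_scalar_mx scalerA mulfV // scale1r.
have E2 : ((chol_pivot G)^-1 *: ursubmx G)^T *m ulsubmx G = (ursubmx G)^T.
  by rewrite ulE mul_mx_scalar linearZ /= scalerA mulfV // scale1r.
rewrite mulmxN E1 addNr linearN /= mulNmx E2 addNr mul0mx add0r.
by rewrite linearZ /= mulNmx -scalemxAl addrC.
Qed.

Lemma chol_pivot_gt0 G : posdef_mx G -> 0 < chol_pivot G.
Proof.
move=> G_pd; have e0_neq0 : col_mx (1%:M : 'M[R]_1) (0 : 'cV[R]_p) != 0.
  by rewrite col_mx_eq0 negb_and oner_eq0.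
have := G_pd _ e0_neq0; rewrite -[G]submxK tr_col_mx mul_row_block mul_row_col.
by rewrite !trmx1 !trmx0 !mul1mx !mul0mx !mulmx1 !mulmx0 ?addr0 ?add0r submxK.
Qed.

Lemma schur_compl_spd G : spd_mx G -> spd_mx (schur_compl G).
Proof.
move=> [G_sym G_pd]; have a_neq0 : chol_pivot G != 0.
  by rewrite gt_eqF // chol_pivot_gt0.
split.
  rewrite /sym_mx /schur_compl linearB /= linearZ /= trmx_mul trmxK.
  by rewrite trmx_drsub G_sym.
move=> w w_neq0; have v_neq0 : chol_elim G *m col_mx 0 w != 0.
  rewrite /chol_elim mul_block_col !mul1mx ?mul0mx ?mulmx0 ?add0r ?addr0.
  by rewrite col_mx_eq0 negb_and w_neq0 orbT.
have := G_pd _ v_neq0.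
rewrite mulmx_congr chol_elim_congr // tr_col_mx trmx0 mul_row_block.
by rewrite mul_row_col !mul0mx !mulmx0 !add0r.
Qed.

Lemma inv_chol_stepP G (L : 'M[R]_p) : spd_mx G ->
  L^T *m schur_compl G *m L = 1%:M ->
  (inv_chol_step G L)^T *m G *m inv_chol_step G L = 1%:M.
Proof.
move=> [G_sym G_pd] LSL; have a_gt0 := chol_pivot_gt0 G_pd.
set s := (Num.sqrt (chol_pivot G))^-1.
have s2a : s * chol_pivot G * s = 1.
  have sqrt_neq0 : Num.sqrt (chol_pivot G) != 0 by rewrite sqrtr_eq0 -ltNge.
  rewrite /s -[in X in _ * X * _](sqr_sqrtr (ltW a_gt0)) expr2.
  by rewrite mulrA mulVf // mul1r mulfV.
rewrite /inv_chol_step mulmx_congr chol_elim_congr ?gt_eqF //.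
rewrite tr_block_mx !trmx0 tr_scalar_mx !mulmx_block.
rewrite !mul0mx !mulmx0 ?addr0 ?add0r LSL [ulsubmx G]mx11_scalar -/s.
by rewrite -!scalar_mxM s2a !mul0mx -scalar_mx_block.
Qed.

Lemma schur_compl1 : schur_compl 1%:M = 1%:M.
Proof.
rewrite /schur_compl (scalar_mx_block 1 p) block_mxKdr block_mxKur.
by rewrite mulmx0 scaler0 subr0.
Qed.

Lemma inv_chol_step1 : inv_chol_step 1%:M 1%:M = 1%:M.
Proof.
rewrite /inv_chol_step /chol_elim /chol_pivot (scalar_mx_block 1 p).
rewrite block_mxKul block_mxKur mxE /= sqrtr1 invr1 scaler0 oppr0.
by rewrite -scalar_mx_block mul1mx.
Qed.

End InverseCholeskyStep.

Section SmoothInverseCholesky.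
Variables (R : realType) (l k : nat).

Lemma mxCk_schur_compl p (G : 'rV[R]_l -> 'M[R]_(1 + p)) :
  (forall x, spd_mx (G x)) -> mxCk k G -> mxCk k (fun x => schur_compl (G x)).
Proof.
move=> G_spd CG; have Ca : Ck k (fun x => chol_pivot (G x)) := mxCk_ulsub CG 0 0.
have a_neq0 x : chol_pivot (G x) != 0.
  by rewrite gt_eqF // chol_pivot_gt0 //; case: (G_spd x).
have Cur := mxCk_ursub CG.
apply: (mxCkD (mxCk_drsub CG)); apply: mxCkN; apply: (mxCkZ (CkV a_neq0 Ca)).
exact: mxCk_mul (mxCk_tr Cur) Cur.
Qed.

Lemma mxCk_inv_chol_step p (G : 'rV[R]_l -> 'M[R]_(1 + p)) (L : 'rV[R]_l -> 'M[R]_p) :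
  (forall x, spd_mx (G x)) -> mxCk k G -> mxCk k L ->
  mxCk k (fun x => inv_chol_step (G x) (L x)).
Proof.
move=> G_spd CG CL; have Ca : Ck k (fun x => chol_pivot (G x)) := mxCk_ulsub CG 0 0.
have a_gt0 x : 0 < chol_pivot (G x) by apply: chol_pivot_gt0; case: (G_spd x).
have a_neq0 x : chol_pivot (G x) != 0 by rewrite gt_eqF.
have sqrt_neq0 x : Num.sqrt (chol_pivot (G x)) != 0 by rewrite sqrtr_eq0 -ltNge.
apply: mxCk_mul; apply: mxCk_block => //; try exact: mxCk_cst.
  exact: mxCkN (mxCkZ (CkV a_neq0 Ca) (mxCk_ursub CG)).
exact: mxCk_scalar (CkV sqrt_neq0 (Ck_sqrt a_gt0 Ca)).
Qed.

Lemma smooth_inv_chol p (G : 'rV[R]_l -> 'M[R]_p) :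
  (forall x, spd_mx (G x)) -> mxCk k G ->
  exists L : 'rV[R]_l -> 'M[R]_p, [/\ mxCk k L,
    forall x, (L x)^T *m G x *m L x = 1%:M & forall x, G x = 1%:M -> L x = 1%:M].
Proof.
elim: p G => [|p IH] G G_spd CG.
  exists (fun _ => 1%:M); split=> // [|x]; first exact: mxCk_cst.
  by apply/matrixP => -[].
have S_spd x : spd_mx (schur_compl (G x)) := schur_compl_spd (G_spd x).
have [L [CL LSL L1]] := IH _ S_spd (mxCk_schur_compl G_spd CG).
exists (fun x => inv_chol_step (G x) (L x)); split.
- exact: mxCk_inv_chol_step.
- by move=> x; apply: inv_chol_stepP.
- by move=> x Gx1; rewrite L1 Gx1 ?schur_compl1 // inv_chol_step1.
Qed.

End SmoothInverseCholesky.

Lemma posdef_mx_unit (R : realType) p (A : 'M[R]_p) : posdef_mx A -> A \in unitmx.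
Proof.
move=> A_pd; rewrite -row_free_unit -kermx_eq0.
apply/eqP/row_matrixP => i; rewrite row0; apply/eqP/negPn/negP => ker_i_neq0.
have := A_pd (row i (kermx A))^T; rewrite trmx_eq0 => /(_ ker_i_neq0).
by rewrite trmxK -row_mul mulmx_ker row0 mul0mx mxE ltxx.
Qed.

Lemma spd_mx_congr (R : realType) n p (A : 'M[R]_n) (U : 'M[R]_(n, p)) (V : 'M[R]_(p, n)) :
  spd_mx A -> V *m U = 1%:M -> spd_mx (U^T *m A *m U).
Proof.
move=> [A_sym A_pd] VU1; split.
  by rewrite /sym_mx !trmx_mul trmxK A_sym mulmxA.
move=> v v_neq0; rewrite -mulmx_congr; apply: A_pd.
apply: contraNneq v_neq0 => Uv0.
by rewrite -[v]mul1mx -VU1 -mulmxA Uv0 mulmx0.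
Qed.

Theorem lemma1 (R : realType) (n m l : nat)
  (K M : 'rV[R]_l -> 'M[R]_n)
  (HK : forall x, spd_mx (K x)) (HM : forall x, spd_mx (M x))
  (HK2 : mxC2_on setT K) (HM2 : mxC2_on setT M)
  (b : 'cV[R]_n) (x0 : 'rV[R]_l) (Um0 : 'M[R]_(n, m))
  (HU : lanczos_basis (K x0) (M x0) b Um0) :
  let F0x0 := Um0^T *m M x0 *m invmx (K x0) *m M x0 *m Um0 in
  exists (N : set 'rV[R]_l) (U0 : 'rV[R]_l -> 'M[R]_(n, m)),
    open N /\ N x0 /\
    (forall x, N x -> M_orthonormal (M x) (U0 x) /\ ((U0 x)^T == Um0^T)%MS) /\
    mxC2_on N (fun x => (U0 x)^T *m M x *m invmx (K x) *m M x *m U0 x) /\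
    (U0 x0)^T *m M x0 *m invmx (K x0) *m M x0 *m U0 x0 = F0x0.
Proof.
move=> F0x0; have [Um0_orth _] := HU.
have CK : mxCk 2 K by apply/mxC2_onT.
have CM : mxCk 2 M by apply/mxC2_onT.
pose G x := Um0^T *m M x *m Um0.
have G_spd x : spd_mx (G x) := spd_mx_congr (HM x) Um0_orth.
have CG : mxCk 2 G := mxCk_mul (mxCk_mul (mxCk_cst _) CM) (mxCk_cst _).
have [L [CL LGL L1]] := smooth_inv_chol G_spd CG.
have L_unit x : L x \in unitmx by have [] := mulmx1_unit (LGL x).
have Kinv_unit x : K x \in unitmx by apply: posdef_mx_unit; case: (HK x).
exists setT, (fun x => Um0 *m L x); split; first exact: openT.
split=> //; split.
  move=> x _; split; first by rewrite /M_orthonormal mulmx_congr LGL.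
  apply/eqmxP; rewrite trmx_mul; apply: eqmxMfull.
  by rewrite row_full_unit unitmx_tr.
split; last by rewrite L1 ?mulmx1.
have CU0 : mxCk 2 (fun x => Um0 *m L x) by apply: mxCk_mul (mxCk_cst _) CL.
have CKinv : mxCk 2 (fun x => invmx (K x)) := mxCk_inv Kinv_unit CK.
apply/mxC2_onT.
exact: mxCk_mul (mxCk_mul (mxCk_mul (mxCk_mul (mxCk_tr CU0) CM) CKinv) CM) CU0.
Qed.
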